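(* Let $\mathbb{T}$ be a time scale, $f:\mathbb{T}\to\mathbb{R}$, and $t\in\mathbb{T}_\kappa$. Let $\alpha\in\,]0,1]$ and $A=\,]0,1]\cap\{1/q: q \text{ an odd positive integer}\}$. Then: (i) If $\alpha\in A$, $t$ is left-dense, and $f$ is nabla fractional differentiable of order $\alpha$ at $t$, then $f$ is continuous at $t$. (ii) If $\alpha\in\,]0,1]\setminus A$, $t$ is left-dense, and $f$ is nabla fractional differentiable of order $\alpha$ at $t$, then $f$ is right-continuous at $t$. (iii) If $f$ is continuous at $t$ and $t$ is left-scattered, then $f$ is nabla fractional differentiable of order $\alpha$ at $t$ with $$f^{\nabla^\alpha}(t)=\frac{f(t)-f^\rho(t)}{[t-\rho(t)]^\alpha}.$$ (iv) If $\alpha\in A$ and $t$ is left-dense, then $f$ is nabla fractional differentiable of order $\alpha$ at $t$ if and only if the limit $\lim_{s\to t}\frac{f(s)-f(t)}{(s-t)^\alpha}$ exists as a finite number; in this case $f^{\nabla^\alpha}(t)=\lim_{s\to t}\frac{f(s)-f(t)}{(s-t)^\alpha}$. (v) If $\alpha\in\,]0,1]\setminus A$ and $t$ is left-dense, then $f$ is nabla fractional differentiable of order $\alpha$ at $t$ if and only if the limit $\lim_{s\to t^+}\frac{f(s)-f(t)}{(s-t)^\alpha}$ exists as a finite number; in this case $f^{\nabla^\alpha}(t)=\lim_{s\to t^+}\frac{f(s)-f(t)}{(s-t)^\alpha}$. (vi) If $f$ is nabla fractional differentiable of order $\alpha$ at $t$, then $f(t)=f^\rho(t)+[t-\rho(t)]^\alpha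 f^{\nabla^\alpha}(t)$.
   Context: A time scale $\mathbb{T}$ is a nonempty closed subset of $\mathbb{R}$ with the topology induced from $\mathbb{R}$. The backward jump operator is $\rho(t)=\sup\{s\in\mathbb{T}: s<t\}$ (with $\sup\emptyset=\inf\mathbb{T}$), the forward jump operator is $\sigma(t)=\inf\{s\in\mathbb{T}:s>t\}$ (with $\inf\emptyset=\sup\mathbb{T}$). A point $t$ is left-dense if $\rho(t)=t$ and left-scattered if $\rho(t)<t$. $\mathbb{T}_\kappa=\mathbb{T}\setminus\{\inf\mathbb{T}\}$ if $\inf\mathbb{T}$ is finite and right-scattered ($\sigma(\inf\mathbb{T})>\inf\mathbb{T}$), and $\mathbb{T}_\kappa=\mathbb{T}$ otherwise. $f^\rho=f\circ\rho$. For $\alpha=1/q$ with $q$ odd, $x^\alpha$ denotes the real $q$-th root, defined for all real $x$. Nabla fractional derivative: for $\alpha\in]0,1]$ and $t\in\mathbb{T}_\kappa$, $f^{\nabla^\alpha}(t)$ is the real number (if it exists) such that for every $\varepsilon>0$ there is $\delta>0$ with $$\big|[f(s)-f^\rho(t)]-f^{\nabla^\alpha}(t)[s-\rho(t)]^\alpha\big|\le\varepsilon|s-\rho(t)|^\alpha$$ for all $s\in\,]t-\delta,t+\delta[\,\cap\mathbb{T}$ when $\alpha\in A$, respectively for all $s\in[t,t+\delta[\,\cap\mathbb{T}$ when $\alpha\notin A$. If it exists, $f$ is called nabla fractional differentiable of order $\alpha$ at $t$. Limits $s\to t$ are taken over $s\in\mathbb{T}$, $s\neq t$. *)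

From Stdlib Require Import Reals.
From Coquelicot Require Import Coquelicot.
Open Scope R_scope.

Definition time_scale (T : R -> Prop) : Prop :=
  (exists x, T x) /\ closed_set T.

(* rho(t) = sup {s in T | s < t}, with sup of the empty set = inf T. *)
Definition rho (T : R -> Prop) (t : R) : R :=
  match Lub_Rbar (fun s => T s /\ s < t) with
  | Finite r => r
  | _ => real (Glb_Rbar T)
  end.

(* sigma(t) = inf {s in T | s > t}, with inf of the empty set = sup T. *)
Definition sigma (T : R -> Prop) (t : R) : R :=
  match Glb_Rbar (fun s => T s /\ t < s) with
  | Finite r => r
  | _ => real (Lub_Rbar T)
  end.

Definition T_kappa (T : R -> Prop) (t : R) : Prop :=
  T t /\
  ~ (is_finite (Glb_Rbar T) /\
     sigma T (real (Glb_Rbar T)) > real (Glb_Rbar T) /\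
     t = real (Glb_Rbar T)).

Definition left_dense (T : R -> Prop) (t : R) : Prop := rho T t = t.
Definition left_scattered (T : R -> Prop) (t : R) : Prop := rho T t < t.

Definition inA (alpha : R) : Prop :=
  exists q : nat, Nat.odd q = true /\ alpha = 1 / INR q.

(* x^alpha: for x > 0 the usual power, 0^alpha = 0, and for x < 0 the odd
   extension -( |x|^alpha ), which is the real q-th root when alpha = 1/q
   with q odd (negative bases only occur in the statement when alpha ∈ A). *)
Definition rpow (alpha x : R) : R :=
  if Rlt_dec 0 x then Rpower x alpha
  else if Rlt_dec x 0 then - Rpower (- x) alpha
  else 0.

Definition nabla_nbhd (T : R -> Prop) (alpha t delta s : R) : Prop :=
  T s /\ ((inA alpha /\ t - delta < s < t + delta) \/
          (~ inA alpha /\ t <= s < t + delta)).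

Definition is_nabla_frac_deriv (T : R -> Prop) (f : R -> R) (alpha t D : R) : Prop :=
  forall eps : R, 0 < eps -> exists delta : R, 0 < delta /\
    forall s : R, nabla_nbhd T alpha t delta s ->
      Rabs ((f s - f (rho T t)) - D * rpow alpha (s - rho T t))
        <= eps * rpow alpha (Rabs (s - rho T t)).

Definition nabla_frac_differentiable (T : R -> Prop) (f : R -> R) (alpha t : R) : Prop :=
  exists D, is_nabla_frac_deriv T f alpha t D.

Definition continuous_on_ts (T : R -> Prop) (f : R -> R) (t : R) : Prop :=
  forall eps, 0 < eps -> exists delta, 0 < delta /\
    forall s, T s -> Rabs (s - t) < delta -> Rabs (f s - f t) < eps.

Definition right_continuous_on_ts (T : R -> Prop) (f : R -> R) (t : R) : Prop :=
  forall eps, 0 < eps -> exists delta, 0 < delta /\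
    forall s, T s -> t <= s -> s - t < delta -> Rabs (f s - f t) < eps.

Definition ts_lim (T : R -> Prop) (g : R -> R) (t L : R) : Prop :=
  forall eps, 0 < eps -> exists delta, 0 < delta /\
    forall s, T s -> s <> t -> Rabs (s - t) < delta -> Rabs (g s - L) < eps.

Definition ts_lim_right (T : R -> Prop) (g : R -> R) (t L : R) : Prop :=
  forall eps, 0 < eps -> exists delta, 0 < delta /\
    forall s, T s -> t < s -> s - t < delta -> Rabs (g s - L) < eps.

(* At a left-dense point ([rho t = t]) dividing the defining estimate by
   [|s - t|^alpha] turns it into the epsilon-delta definition of the limit of
   the fractional difference quotient over the admissible neighbourhood, which
   is two-sided for [alpha] in [A] and right-sided otherwise: this gives (iv)
   and (v), and since [|s - t|^alpha -> 0] also the (right-)continuity in (i)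
   and (ii).  At a left-scattered point no point of [T] lies in
   the open interval [(rho t, t)], so the admissible [s] close to [t] satisfy [s >= t] and the
   estimate reduces to the continuity of [f] and of [x |-> x^alpha] at
   [t - rho t > 0].  Finally (vi) is the estimate at [s = t], which is always
   admissible. *)

From Stdlib Require Import Reals Lra Classical.
From Coquelicot Require Import Coquelicot.
Open Scope R_scope.

Lemma rpow_gt0 a x : 0 < x -> rpow a x = Rpower x a.
Proof. intro Hx; unfold rpow; destruct (Rlt_dec 0 x); [reflexivity | lra]. Qed.

Lemma rpow_0 a : rpow a 0 = 0.
Proof. unfold rpow; destruct (Rlt_dec 0 0); [lra |]; destruct (Rlt_dec 0 0); [lra | reflexivity]. Qed.

Lemma rpow_Rabs a x : rpow a (Rabs x) = Rabs (rpow a x).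
Proof.
  unfold rpow.
  destruct (Rlt_dec 0 x) as [Hx | Hx]; [| destruct (Rlt_dec x 0) as [Hx' | Hx']].
  - rewrite Rabs_pos_eq by lra. destruct (Rlt_dec 0 x); [| lra].
    rewrite Rabs_pos_eq; [reflexivity | left; apply exp_pos].
  - rewrite Rabs_left by lra. destruct (Rlt_dec 0 (- x)); [| lra].
    rewrite Rabs_Ropp, Rabs_pos_eq; [reflexivity | left; apply exp_pos].
  - replace x with 0 by lra. rewrite Rabs_R0.
    repeat (destruct (Rlt_dec _ _); [lra |]). reflexivity.
Qed.

Lemma rpow_neq0 a x : x <> 0 -> rpow a x <> 0.
Proof.
  intro Hx; unfold rpow. destruct (Rlt_dec 0 x); [| destruct (Rlt_dec x 0)].
  - apply Rgt_not_eq, exp_pos.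
  - apply Ropp_neq_0_compat, Rgt_not_eq, exp_pos.
  - lra.
Qed.

Lemma rpow_small a e : 0 < a -> 0 < e ->
  exists d, 0 < d /\ forall x, Rabs x < d -> Rabs (rpow a x) < e.
Proof.
  intros Ha He. exists (Rpower e (/ a)). split; [apply exp_pos |].
  intros x Hx. rewrite <- rpow_Rabs.
  destruct (Rabs_pos x) as [Hpos | Hzero].
  - rewrite rpow_gt0 by exact Hpos.
    replace e with (Rpower (Rpower e (/ a)) a).
    + apply Rlt_Rpower_l; lra.
    + rewrite Rpower_mult, Rinv_l by lra. apply Rpower_1; lra.
  - rewrite <- Hzero, rpow_0; lra.
Qed.

Lemma Rpower_l_continuous a x0 : 0 < x0 -> forall e, 0 < e -> exists d, 0 < d /\
  forall x, Rabs (x - x0) < d -> Rabs (Rpower x a - Rpower x0 a) < e.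
Proof.
  intros Hx0 e He.
  assert (Hcont : continuity_pt (fun x => Rpower x a) x0).
  { apply derivable_continuous_pt. exists (a * Rpower x0 (a - 1)).
    now apply derivable_pt_lim_power. }
  destruct (Hcont e He) as [d [Hd Hball]]. exists d; split; [exact Hd |].
  intros x Hx. destruct (Req_dec x x0) as [-> | Hneq].
  - unfold Rminus; rewrite Rplus_opp_r, Rabs_R0; exact He.
  - apply (Hball x). split; [split; [exact I | auto] | exact Hx].
Qed.

Lemma Rabs_sub_mul_div a b r : r <> 0 -> Rabs (a - b * r) = Rabs (a / r - b) * Rabs r.
Proof. intro Hr. rewrite <- Rabs_mult. f_equal. field. exact Hr. Qed.

Lemma rho_ge T t s : T s -> s < t -> s <= rho T t.
Proof.
  intros Hs Hst. unfold rho.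
  destruct (Lub_Rbar_correct (fun s => T s /\ s < t)) as [Hub Hlub].
  destruct (Lub_Rbar (fun s => T s /\ s < t)) as [r | |].
  - exact (Hub s (conj Hs Hst)).
  - exfalso. apply (Hlub (Finite t)). intros y [_ Hy]. simpl; lra.
  - exfalso. exact (Hub s (conj Hs Hst)).
Qed.

Section NablaNeighbourhood.

Variables (T : R -> Prop) (alpha t : R).

Lemma nabla_nbhd_Rabs d s : nabla_nbhd T alpha t d s -> T s /\ Rabs (s - t) < d.
Proof. intros [Ts [[_ Hs] | [_ Hs]]]; split; [exact Ts | | exact Ts |]; apply Rabs_def1; lra. Qed.

Lemma nabla_nbhd_ge d s : ~ inA alpha -> nabla_nbhd T alpha t d s -> t <= s.
Proof. intros HA [_ [[Hin _] | [_ Hs]]]; [contradiction | lra]. Qed.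

Lemma nabla_nbhd_inA d s : inA alpha -> T s -> Rabs (s - t) < d -> nabla_nbhd T alpha t d s.
Proof. intros HA Ts Hs. apply Rabs_def2 in Hs. split; [exact Ts |]. left; split; [exact HA | lra]. Qed.

Lemma nabla_nbhd_not_inA d s :
  ~ inA alpha -> T s -> t <= s -> s - t < d -> nabla_nbhd T alpha t d s.
Proof. intros HA Ts Hts Hs. split; [exact Ts |]. right; split; [exact HA | lra]. Qed.

Lemma nabla_nbhd_le d d' s : d <= d' -> nabla_nbhd T alpha t d s -> nabla_nbhd T alpha t d' s.
Proof. intros Hd [Ts [[HA Hs] | [HA Hs]]]; split; [exact Ts | left | exact Ts | right]; split; auto; lra. Qed.

Lemma nabla_nbhd_center d : T t -> 0 < d -> nabla_nbhd T alpha t d t.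
Proof.
  intros Tt Hd. split; [exact Tt |].
  destruct (classic (inA alpha)); [left | right]; split; auto; lra.
Qed.

Definition nabla_lim (g : R -> R) (L : R) : Prop :=
  forall eps, 0 < eps -> exists delta, 0 < delta /\
    forall s, nabla_nbhd T alpha t delta s -> s <> t -> Rabs (g s - L) < eps.

Lemma ts_lim_nabla_lim g L : inA alpha -> ts_lim T g t L <-> nabla_lim g L.
Proof.
  intro HA; split; intros Hlim eps He; destruct (Hlim eps He) as [d [Hd Hg]];
    exists d; split; auto.
  - intros s Hs Hst. destruct (nabla_nbhd_Rabs _ _ Hs). auto.
  - intros s Ts Hst Hs. apply Hg; [apply nabla_nbhd_inA |]; auto.
Qed.

Lemma ts_lim_right_nabla_lim g L : ~ inA alpha -> ts_lim_right T g t L <-> nabla_lim g L.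
Proof.
  intro HA; split; intros Hlim eps He; destruct (Hlim eps He) as [d [Hd Hg]];
    exists d; split; auto.
  - intros s Hs Hst. pose proof (nabla_nbhd_ge _ _ HA Hs).
    destruct (nabla_nbhd_Rabs _ _ Hs) as [Ts Hs'].
    apply Rabs_def2 in Hs'. apply Hg; auto; lra.
  - intros s Ts Hts Hs. apply Hg; [apply nabla_nbhd_not_inA |]; auto; lra.
Qed.

End NablaNeighbourhood.

Lemma continuous_on_ts_of_ts_lim T f t : ts_lim T f t (f t) -> continuous_on_ts T f t.
Proof.
  intros Hlim eps He. destruct (Hlim eps He) as [d [Hd Hf]]. exists d; split; auto.
  intros s Ts Hs. destruct (Req_dec s t) as [-> | Hst]; auto.
  unfold Rminus; rewrite Rplus_opp_r, Rabs_R0; exact He.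
Qed.

Lemma right_continuous_on_ts_of_ts_lim_right T f t :
  ts_lim_right T f t (f t) -> right_continuous_on_ts T f t.
Proof.
  intros Hlim eps He. destruct (Hlim eps He) as [d [Hd Hf]]. exists d; split; auto.
  intros s Ts Hts Hs. destruct (Req_dec s t) as [-> | Hst].
  - unfold Rminus; rewrite Rplus_opp_r, Rabs_R0; exact He.
  - apply Hf; auto; lra.
Qed.

Section LeftDense.

Variables (T : R -> Prop) (f : R -> R) (alpha t : R).
Hypothesis (Hdense : left_dense T t).

Lemma is_nabla_frac_deriv_left_dense D :
  is_nabla_frac_deriv T f alpha t D <->
  nabla_lim T alpha t (fun s => (f s - f t) / rpow alpha (s - t)) D.
Proof.
  unfold is_nabla_frac_deriv, left_dense in *. rewrite Hdense.
  split; intros Hd eps He.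
  - destruct (Hd (eps / 2)) as [d [Hd0 Hest]]; [lra |].
    exists d; split; auto. intros s Hs Hst.
    assert (Hr : 0 < Rabs (rpow alpha (s - t))) by (apply Rabs_pos_lt, rpow_neq0; lra).
    specialize (Hest s Hs). rewrite rpow_Rabs, Rabs_sub_mul_div in Hest by (apply rpow_neq0; lra).
    apply Rmult_le_reg_r in Hest; [lra | exact Hr].
  - destruct (Hd eps He) as [d [Hd0 Hquot]]. exists d; split; auto.
    intros s Hs. rewrite rpow_Rabs. destruct (Req_dec s t) as [-> | Hst].
    + replace (t - t) with 0 by ring. rewrite rpow_0, Rabs_R0.
      replace (f t - f t - D * 0) with 0 by ring. rewrite Rabs_R0; lra.
    + rewrite Rabs_sub_mul_div by (apply rpow_neq0; lra).
      apply Rmult_le_compat_r; [apply Rabs_pos | left; auto].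
Qed.

Lemma nabla_lim_of_nabla_frac_deriv D : 0 < alpha ->
  is_nabla_frac_deriv T f alpha t D -> nabla_lim T alpha t f (f t).
Proof.
  intros Ha Hd eps He. unfold left_dense in Hdense.
  destruct (Hd 1 Rlt_0_1) as [d0 [Hd0 Hest]].
  assert (HD : 0 < Rabs D + 1) by (pose proof (Rabs_pos D); lra).
  destruct (rpow_small alpha (eps / (Rabs D + 1)) Ha) as [d1 [Hd1 Hsmall]].
  { apply Rdiv_lt_0_compat; lra. }
  exists (Rmin d0 d1). split; [now apply Rmin_pos |].
  intros s Hs _.
  set (r := rpow alpha (s - t)).
  assert (Hr : Rabs r < eps / (Rabs D + 1)).
  { apply Hsmall. eapply Rlt_le_trans; [apply (nabla_nbhd_Rabs _ _ _ _ _ Hs) | apply Rmin_r]. }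
  assert (Hfs : Rabs (f s - f t - D * r) <= Rabs r).
  { assert (Hs0 : nabla_nbhd T alpha t d0 s) by (eapply nabla_nbhd_le; [apply Rmin_l | exact Hs]).
    specialize (Hest s Hs0). now rewrite Hdense, Rmult_1_l, rpow_Rabs in Hest. }
  assert (Htri : Rabs (f s - f t) <= (Rabs D + 1) * Rabs r).
  { replace (f s - f t) with ((f s - f t - D * r) + D * r) by ring.
    eapply Rle_trans; [apply Rabs_triang |]. rewrite Rabs_mult. lra. }
  apply (Rmult_lt_compat_l (Rabs D + 1)) in Hr; [| exact HD].
  replace ((Rabs D + 1) * (eps / (Rabs D + 1))) with eps in Hr by (field; lra).
  lra.
Qed.

End LeftDense.
Lemma nabla_nbhd_left_scattered_ge T alpha t d s :
  d <= t - rho T t -> nabla_nbhd T alpha t d s -> t <= s.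
Proof.
  intros Hd Hs. destruct (nabla_nbhd_Rabs _ _ _ _ _ Hs) as [Ts Hst].
  apply Rabs_def2 in Hst. destruct (Rlt_or_le s t) as [Hlt | Hle]; [| exact Hle].
  pose proof (rho_ge T t s Ts Hlt). lra.
Qed.

Lemma is_nabla_frac_deriv_left_scattered T f alpha t : 0 < alpha ->
  continuous_on_ts T f t -> left_scattered T t ->
  is_nabla_frac_deriv T f alpha t ((f t - f (rho T t)) / rpow alpha (t - rho T t)).
Proof.
  intros Ha Hf Hscat eps He. unfold left_scattered in Hscat.
  set (p := rho T t) in *. set (a := t - p).
  assert (Ha0 : 0 < a) by (unfold a; lra).
  rewrite (rpow_gt0 _ _ Ha0). set (c := Rpower a alpha).
  assert (Hc : 0 < c) by apply exp_pos.
  assert (Hec : 0 < eps * c) by now apply Rmult_lt_0_compat.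
  set (D := (f t - f p) / c).
  assert (HD : 0 < Rabs D + 1) by (pose proof (Rabs_pos D); lra).
  destruct (Hf (eps * c / 2)) as [d1 [Hd1 Hf1]]; [lra |].
  destruct (Rpower_l_continuous alpha a Ha0 (eps * c / (2 * (Rabs D + 1))))
    as [d2 [Hd2 Hpow]]; [apply Rdiv_lt_0_compat; lra |].
  exists (Rmin a (Rmin d1 d2)). split; [repeat apply Rmin_pos; auto |].
  intros s Hs.
  assert (Hts : t <= s) by (eapply nabla_nbhd_left_scattered_ge; [apply Rmin_l | exact Hs]).
  destruct (nabla_nbhd_Rabs _ _ _ _ _ Hs) as [Ts Hst].
  pose proof (Rmin_r a (Rmin d1 d2)); pose proof (Rmin_l d1 d2); pose proof (Rmin_r d1 d2).
  rewrite Rabs_pos_eq in Hst by lra.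
  assert (Hsp : 0 < s - p) by (unfold a in *; lra).
  rewrite (Rabs_pos_eq (s - p)), rpow_gt0 by lra. set (c' := Rpower (s - p) alpha).
  assert (Hcc' : c <= c') by (apply Rle_Rpower_l; [lra | unfold a; lra]).
  assert (Hfs : Rabs (f s - f t) < eps * c / 2) by (apply Hf1; [exact Ts |]; rewrite Rabs_pos_eq; lra).
  assert (Hpow_s : Rabs D * Rabs (c' - c) <= eps * c / 2).
  { assert (Hc'c : Rabs (c' - c) < eps * c / (2 * (Rabs D + 1))).
    { apply Hpow. replace (s - p - a) with (s - t) by (unfold a; ring).
      rewrite Rabs_pos_eq; lra. }
    apply (Rmult_lt_compat_l (Rabs D + 1)) in Hc'c; [| exact HD].
    replace ((Rabs D + 1) * (eps * c / (2 * (Rabs D + 1)))) with (eps * c / 2) in Hc'c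
      by (field; lra).
    pose proof (Rabs_pos (c' - c)). nra. }
  replace (f s - f p - D * c') with ((f s - f t) - D * (c' - c)) by (unfold D; field; lra).
  eapply Rle_trans; [apply Rabs_triang |]. rewrite Rabs_Ropp, Rabs_mult.
  apply (Rmult_le_compat_l eps) in Hcc'; lra.
Qed.

Lemma is_nabla_frac_deriv_center T f alpha t D : T t ->
  is_nabla_frac_deriv T f alpha t D -> f t = f (rho T t) + rpow alpha (t - rho T t) * D.
Proof.
  intros Tt Hd.
  set (X := f t - f (rho T t) - D * rpow alpha (t - rho T t)).
  set (c := Rabs (rpow alpha (t - rho T t))).
  assert (Hest : forall eps, 0 < eps -> Rabs X <= eps * c).
  { intros eps He. destruct (Hd eps He) as [d [Hd0 Hs]].
    unfold c; rewrite <- rpow_Rabs. now apply Hs, nabla_nbhd_center. }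
  assert (HX : Rabs X <= 0).
  { apply Rle_plus_epsilon. intros eps He.
    assert (Hc : 0 <= c) by apply Rabs_pos.
    assert (Hec : 0 < eps / (c + 1)) by (apply Rdiv_lt_0_compat; lra).
    specialize (Hest _ Hec).
    replace (eps / (c + 1) * c) with (eps - eps / (c + 1)) in Hest by (field; lra).
    lra. }
  assert (X = 0) by (apply Rabs_eq_0; pose proof (Rabs_pos X); lra).
  unfold X in *; lra.
Qed.

Theorem theorem3p3 (T : R -> Prop) (HT : time_scale T) (f : R -> R)
  (t : R) (Ht : T_kappa T t) (alpha : R) (Ha : 0 < alpha <= 1) :
  (* (i) *)
  (inA alpha -> left_dense T t -> nabla_frac_differentiable T f alpha t ->
     continuous_on_ts T f t) /\
  (* (ii) *)
  (~ inA alpha -> left_dense T t -> nabla_frac_differentiable T f alpha t ->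
     right_continuous_on_ts T f t) /\
  (* (iii) *)
  (continuous_on_ts T f t -> left_scattered T t ->
     is_nabla_frac_deriv T f alpha t
       ((f t - f (rho T t)) / rpow alpha (t - rho T t))) /\
  (* (iv) *)
  (inA alpha -> left_dense T t ->
     (nabla_frac_differentiable T f alpha t <->
        exists L, ts_lim T (fun s => (f s - f t) / rpow alpha (s - t)) t L) /\
     (forall D, is_nabla_frac_deriv T f alpha t D ->
        ts_lim T (fun s => (f s - f t) / rpow alpha (s - t)) t D) /\
     (forall L, ts_lim T (fun s => (f s - f t) / rpow alpha (s - t)) t L ->
        is_nabla_frac_deriv T f alpha t L)) /\
  (* (v) *)
  (~ inA alpha -> left_dense T t ->
     (nabla_frac_differentiable T f alpha t <->
        exists L, ts_lim_right T (fun s => (f s - f t) / rpow alpha (s - t)) t L) /\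
     (forall D, is_nabla_frac_deriv T f alpha t D ->
        ts_lim_right T (fun s => (f s - f t) / rpow alpha (s - t)) t D) /\
     (forall L, ts_lim_right T (fun s => (f s - f t) / rpow alpha (s - t)) t L ->
        is_nabla_frac_deriv T f alpha t L)) /\
  (* (vi) *)
  (forall D, is_nabla_frac_deriv T f alpha t D ->
     f t = f (rho T t) + rpow alpha (t - rho T t) * D).
Proof.
  destruct Ht as [Tt _]. destruct Ha as [Ha _].
  split; [| split; [| split; [| split; [| split]]]].
  - intros HA Hdense [D HD]. apply continuous_on_ts_of_ts_lim.
    apply (ts_lim_nabla_lim T alpha); [exact HA |].
    exact (nabla_lim_of_nabla_frac_deriv T f alpha t Hdense D Ha HD).
  - intros HA Hdense [D HD]. apply right_continuous_on_ts_of_ts_lim_right.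
    apply (ts_lim_right_nabla_lim T alpha); [exact HA |].
    exact (nabla_lim_of_nabla_frac_deriv T f alpha t Hdense D Ha HD).
  - intros Hf Hscat. now apply is_nabla_frac_deriv_left_scattered.
  - intros HA Hdense.
    assert (Hiff : forall L, is_nabla_frac_deriv T f alpha t L <->
                   ts_lim T (fun s => (f s - f t) / rpow alpha (s - t)) t L).
    { intro L. rewrite is_nabla_frac_deriv_left_dense, ts_lim_nabla_lim; easy. }
    split; [split; intros [L HL]; exists L; apply Hiff; exact HL |].
    split; intro L; apply Hiff.
  - intros HA Hdense.
    assert (Hiff : forall L, is_nabla_frac_deriv T f alpha t L <->
                   ts_lim_right T (fun s => (f s - f t) / rpow alpha (s - t)) t L).
    { intro L. rewrite is_nabla_frac_deriv_left_dense, ts_lim_right_nabla_lim; easy. }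
    split; [split; intros [L HL]; exists L; apply Hiff; exact HL |].
    split; intro L; apply Hiff.
  - intro D. now apply is_nabla_frac_deriv_center.
Qed.
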